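(* Let $A$ be a C*-algebra, let $\{p_i\}_{i\in I}$ be a family of mutually orthogonal projections in the multiplier algebra $M(A)$, and let $B$ be a *-subalgebra of $A$ such that $B\subseteq\bigoplus_{i,j\in I}B\cap(p_iAp_j)$ (i.e. every $b\in B$ is a finite sum of elements of the sets $B\cap(p_iAp_j)$) and such that $B\cap(p_iAp_i)$ is a core subalgebra of $A$ for every $i\in I$. Then $B$ is a core subalgebra of $A$.
   Context: A representation of a *-algebra $B$ is a multiplicative, *-preserving, linear map $\pi:B\to\mathcal B(H)$ for some Hilbert space $H$ (no continuity assumed). A *-subalgebra $B$ of a C*-algebra $A$ is a core subalgebra of $A$ if every representation of $B$ is continuous with respect to the norm induced from $A$. *)

From Stdlib Require Import Reals List.
Open Scope R_scope.

Record C := mkC { Re : R; Im : R }.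
Definition C0 : C := mkC 0 0.
Definition C1 : C := mkC 1 0.
Definition Cadd (z w : C) : C := mkC (Re z + Re w) (Im z + Im w).
Definition Cmul (z w : C) : C :=
  mkC (Re z * Re w - Im z * Im w) (Re z * Im w + Im z * Re w).
Definition Cconj (z : C) : C := mkC (Re z) (- Im z).
Definition Cabs (z : C) : R := sqrt (Re z * Re z + Im z * Im z).

Definition norm_complete {T : Type} (add : T -> T -> T) (opp : T -> T)
  (nrm : T -> R) : Prop :=
  forall u : nat -> T,
    (forall eps, eps > 0 -> exists N, forall m n, (m >= N)%nat -> (n >= N)%nat ->
        nrm (add (u m) (opp (u n))) < eps) ->
    exists l, forall eps, eps > 0 -> exists N, forall n, (n >= N)%nat ->
        nrm (add (u n) (opp l)) < eps.

Record CStarAlgebra := {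
  car :> Type;
  zero : car;
  add : car -> car -> car;
  opp : car -> car;
  smul : C -> car -> car;
  mul : car -> car -> car;
  star : car -> car;
  norm : car -> R;
  addA : forall x y z, add x (add y z) = add (add x y) z;
  addC : forall x y, add x y = add y x;
  add0 : forall x, add zero x = x;
  addN : forall x, add x (opp x) = zero;
  smulDr : forall c x y, smul c (add x y) = add (smul c x) (smul c y);
  smulDl : forall c d x, smul (Cadd c d) x = add (smul c x) (smul d x);
  smulA : forall c d x, smul c (smul d x) = smul (Cmul c d) x;
  smul1 : forall x, smul C1 x = x;
  mulA : forall x y z, mul x (mul y z) = mul (mul x y) z;
  mulDl : forall x y z, mul (add x y) z = add (mul x z) (mul y z);
  mulDr : forall x y z, mul x (add y z) = add (mul x y) (mul x z);
  smul_mull : forall c x y, smul c (mul x y) = mul (smul c x) y;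
  smul_mulr : forall c x y, smul c (mul x y) = mul x (smul c y);
  starK : forall x, star (star x) = x;
  starD : forall x y, star (add x y) = add (star x) (star y);
  starZ : forall c x, star (smul c x) = smul (Cconj c) (star x);
  starM : forall x y, star (mul x y) = mul (star y) (star x);
  norm_ge0 : forall x, 0 <= norm x;
  norm_eq0 : forall x, norm x = 0 -> x = zero;
  norm_triangle : forall x y, norm (add x y) <= norm x + norm y;
  normZ : forall c x, norm (smul c x) = Cabs c * norm x;
  normM : forall x y, norm (mul x y) <= norm x * norm y;
  norm_cstar : forall x, norm (mul (star x) x) = norm x * norm x;
  norm_compl : norm_complete add opp norm
}.

Arguments zero {_}.

Definition star_subalgebra (A : CStarAlgebra) (B : A -> Prop) : Prop :=
  B zero /\
  (forall x y, B x -> B y -> B (add A x y)) /\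
  (forall c x, B x -> B (smul A c x)) /\
  (forall x y, B x -> B y -> B (mul A x y)) /\
  (forall x, B x -> B (star A x)).

(* ---------- multiplier algebra: double centralizers ---------- *)
Record multiplier (A : CStarAlgebra) := {
  mL : A -> A;   (* a |-> m a *)
  mR : A -> A;   (* a |-> a m *)
  m_ax : forall a b, mul A a (mL b) = mul A (mR a) b
}.
Arguments mL {A}. Arguments mR {A}.

(* m is a projection in M(A): m = m^2 = m-star, where the product is
   (L1,R1)(L2,R2) = (L1 o L2, R2 o R1) and the adjoint of (L,R) is
   (a |-> star (R (star a)), a |-> star (L (star a))). *)
Definition mprojection {A : CStarAlgebra} (m : multiplier A) : Prop :=
  (forall a, mL m (mL m a) = mL m a) /\
  (forall a, mR m (mR m a) = mR m a) /\
  (forall a, mL m a = star A (mR m (star A a))) /\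
  (forall a, mR m a = star A (mL m (star A a))).

(* m n = 0 in M(A) *)
Definition mprod_zero {A : CStarAlgebra} (m n : multiplier A) : Prop :=
  (forall a, mL m (mL n a) = zero) /\ (forall a, mR n (mR m a) = zero).

Definition in_corner {A : CStarAlgebra} (p q : multiplier A) (x : A) : Prop :=
  exists a : A, x = mL p (mR q a).

Record Hilbert := {
  hcar :> Type;
  hzero : hcar;
  hadd : hcar -> hcar -> hcar;
  hopp : hcar -> hcar;
  hsmul : C -> hcar -> hcar;
  inner : hcar -> hcar -> C;   (* linear in the first variable *)
  haddA : forall x y z, hadd x (hadd y z) = hadd (hadd x y) z;
  haddC : forall x y, hadd x y = hadd y x;
  hadd0 : forall x, hadd hzero x = x;
  haddN : forall x, hadd x (hopp x) = hzero;
  hsmulDr : forall c x y, hsmul c (hadd x y) = hadd (hsmul c x) (hsmul c y);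
  hsmulDl : forall c d x, hsmul (Cadd c d) x = hadd (hsmul c x) (hsmul d x);
  hsmulA : forall c d x, hsmul c (hsmul d x) = hsmul (Cmul c d) x;
  hsmul1 : forall x, hsmul C1 x = x;
  innerDl : forall x y z, inner (hadd x y) z = Cadd (inner x z) (inner y z);
  innerZl : forall c x y, inner (hsmul c x) y = Cmul c (inner x y);
  inner_conj : forall x y, inner y x = Cconj (inner x y);
  inner_pos : forall x, 0 <= Re (inner x x);
  inner_def : forall x, inner x x = C0 -> x = hzero;
  hcompl : norm_complete hadd hopp (fun x => sqrt (Re (inner x x)))
}.
Arguments hzero {_}.

Definition hnorm {H : Hilbert} (x : H) : R := sqrt (Re (inner H x x)).

Definition bounded_operator (H : Hilbert) (T : H -> H) : Prop :=
  (forall x y, T (hadd H x y) = hadd H (T x) (T y)) /\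
  (forall c x, T (hsmul H c x) = hsmul H c (T x)) /\
  (exists M, forall x, hnorm (T x) <= M * hnorm x).

Definition opnorm_le (H : Hilbert) (T : H -> H) (c : R) : Prop :=
  forall x, hnorm (T x) <= c * hnorm x.

(* a representation of the *-algebra B (a *-subalgebra of A) on H:
   multiplicative, *-preserving, linear map B -> B(H); no continuity *)
Definition representation (A : CStarAlgebra) (B : A -> Prop) (H : Hilbert)
  (pi : A -> H -> H) : Prop :=
  (forall b, B b -> bounded_operator H (pi b)) /\
  (forall b1 b2, B b1 -> B b2 -> forall x,
      pi (add A b1 b2) x = hadd H (pi b1 x) (pi b2 x)) /\
  (forall c b, B b -> forall x, pi (smul A c b) x = hsmul H c (pi b x)) /\
  (forall b1 b2, B b1 -> B b2 -> forall x, pi (mul A b1 b2) x = pi b1 (pi b2 x)) /\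
  (forall b, B b -> forall x y, inner H (pi b x) y = inner H x (pi (star A b) y)).

Definition rep_continuous (A : CStarAlgebra) (B : A -> Prop) (H : Hilbert)
  (pi : A -> H -> H) : Prop :=
  forall b0, B b0 -> forall eps, eps > 0 -> exists delta, delta > 0 /\
    forall b, B b -> norm A (add A b (opp A b0)) < delta ->
      exists c, c < eps /\
        opnorm_le H (fun x => hadd H (pi b x) (hopp H (pi b0 x))) c.

Definition core_subalgebra (A : CStarAlgebra) (B : A -> Prop) : Prop :=
  star_subalgebra A B /\
  forall (H : Hilbert) (pi : A -> H -> H),
    representation A B H pi -> rep_continuous A B H pi.

Definition sumA {A : CStarAlgebra} (l : list A) : A :=
  fold_right (add A) zero l.

(* Given a representation [pi] of
   [B], we show that [pi] is contractive, [|pi(b)| <= |b|], which implies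
   continuity.

   - Core diagonal corners carry bounds [|pi(z)| <= C |z|]; via the
     C*-identity [|z|^2 = |z* z|] the same bound holds on off-diagonal
     corners [B ∩ p_i A p_j].
   - For a finite index list [S], the elements decomposable over [S] are the
     sums of their [|S|^2] blocks [p_i w p_j], so [pi] is bounded on them
     with constant [|S|^2 C]; this set is closed under products and [*].
   - A spectral-radius style argument (squaring self-adjoint elements and
     using [|z^2| = |z|^2] in [A] and [|pi(z) x|^2 = <pi(z* z) x, x>]) improves any such constant
     [M] to [M^(1/2^n)], hence to [1]; applying this to [b* b] gives
     [|pi(b)| <= |b|]. *)

From Pilot Require Import Defs.
From Stdlib Require Import Reals List Lra Lia Classical.
Open Scope R_scope.

Section CStarAlgebraFacts.
Context {A : CStarAlgebra}.

Lemma addr0 (x : A) : add A x zero = x.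
Proof. rewrite addC; apply add0. Qed.

Lemma add_idem_eq0 (x : A) : add A x x = x -> x = zero.
Proof.
  intro Hx. transitivity (add A (add A x x) (opp A x)).
  - rewrite <- addA, addN, addr0; reflexivity.
  - rewrite Hx, addN; reflexivity.
Qed.

Lemma opp_unique (x y : A) : add A x y = zero -> y = opp A x.
Proof.
  intro Hxy.
  rewrite <- (add0 A y), <- (addN A x), (addC A x (opp A x)), <- addA, Hxy, addr0.
  reflexivity.
Qed.

Lemma oppK (x : A) : opp A (opp A x) = x.
Proof. symmetry; apply opp_unique; rewrite addC; apply addN. Qed.

Lemma opp0 : opp A zero = zero.
Proof. symmetry; apply opp_unique, add0. Qed.

Lemma subr_eq0 (u v : A) : add A u (opp A v) = zero -> u = v.
Proof. intro Huv. apply opp_unique in Huv. rewrite <- (oppK u), <- Huv, oppK; reflexivity. Qed.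

Lemma mulr0 (x : A) : mul A x zero = zero.
Proof. apply add_idem_eq0; rewrite <- mulDr, add0; reflexivity. Qed.

Lemma mul0r (x : A) : mul A zero x = zero.
Proof. apply add_idem_eq0; rewrite <- mulDl, add0; reflexivity. Qed.

Lemma smul0 (x : A) : smul A Defs.C0 x = zero.
Proof.
  apply add_idem_eq0; rewrite <- smulDl.
  replace (Cadd Defs.C0 Defs.C0) with Defs.C0 by (unfold Cadd, Defs.C0; simpl; f_equal; ring).
  reflexivity.
Qed.

Lemma opp_smul (x : A) : opp A x = smul A (mkC (-1) 0) x.
Proof.
  symmetry; apply opp_unique. rewrite <- (smul1 A x) at 1. rewrite <- smulDl.
  replace (Cadd Defs.C1 (mkC (-1) 0)) with Defs.C0 by (unfold Cadd, Defs.C0, Defs.C1; simpl; f_equal; ring).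
  apply smul0.
Qed.

Lemma mulrN (a v : A) : mul A a (opp A v) = opp A (mul A a v).
Proof. rewrite !opp_smul, <- smul_mulr; reflexivity. Qed.

Lemma star0 : star A zero = zero.
Proof. apply add_idem_eq0; rewrite <- starD, add0; reflexivity. Qed.

Lemma norm0 : norm A zero = 0.
Proof.
  rewrite <- (smul0 zero), normZ. unfold Cabs, Defs.C0; simpl.
  replace (0 * 0 + 0 * 0) with 0 by ring. rewrite sqrt_0; ring.
Qed.

(* The C*-identity forces the involution to be isometric. *)
Lemma norm_le_star (x : A) : norm A x <= norm A (star A x).
Proof.
  pose proof (norm_cstar A x). pose proof (normM A (star A x) x).
  pose proof (norm_ge0 A x). pose proof (norm_ge0 A (star A x)).
  destruct (Req_dec (norm A x) 0); nra.
Qed.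

Lemma norm_star (x : A) : norm A (star A x) = norm A x.
Proof.
  apply Rle_antisym; [| apply norm_le_star].
  rewrite <- (starK A x) at 2; apply norm_le_star.
Qed.

Lemma eq_of_left_mul (u v : A) : (forall a, mul A a u = mul A a v) -> u = v.
Proof.
  intro Huv. apply subr_eq0. set (d := add A u (opp A v)).
  assert (Hd : mul A (star A d) d = zero)
    by (unfold d; rewrite mulDr, mulrN, Huv, addN; reflexivity).
  pose proof (norm_cstar A d) as Hc. rewrite Hd, norm0 in Hc.
  apply norm_eq0. pose proof (norm_ge0 A d). nra.
Qed.

Lemma eq_of_right_mul (u v : A) : (forall a, mul A u a = mul A v a) -> u = v.
Proof.
  intro Huv. rewrite <- (starK A u), <- (starK A v). f_equal.
  apply eq_of_left_mul. intro a.
  rewrite <- (starK A a), <- !starM, Huv; reflexivity.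
Qed.

End CStarAlgebraFacts.

Section Multipliers.
Context {A : CStarAlgebra}.

Lemma mL_mul (m : multiplier A) (x y : A) : mL m (mul A x y) = mul A (mL m x) y.
Proof. apply eq_of_left_mul; intro a. rewrite m_ax, mulA, <- m_ax, mulA; reflexivity. Qed.

Lemma mR_mul (m : multiplier A) (x y : A) : mR m (mul A x y) = mul A x (mR m y).
Proof. apply eq_of_right_mul; intro b. rewrite <- m_ax, <- mulA, m_ax, mulA; reflexivity. Qed.

Lemma mL_add (m : multiplier A) (x y : A) : mL m (add A x y) = add A (mL m x) (mL m y).
Proof. apply eq_of_left_mul; intro a. rewrite m_ax, !mulDr, <- !m_ax; reflexivity. Qed.

Lemma mR_add (m : multiplier A) (x y : A) : mR m (add A x y) = add A (mR m x) (mR m y).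
Proof. apply eq_of_right_mul; intro b. rewrite <- m_ax, !mulDl, !m_ax; reflexivity. Qed.

Lemma mL_zero (m : multiplier A) : mL m zero = zero.
Proof. apply add_idem_eq0; rewrite <- mL_add, add0; reflexivity. Qed.

Lemma mR_zero (m : multiplier A) : mR m zero = zero.
Proof. apply add_idem_eq0; rewrite <- mR_add, add0; reflexivity. Qed.

Lemma mLR_comm (p q : multiplier A) (c : A) : mL p (mR q c) = mR q (mL p c).
Proof. apply eq_of_left_mul; intro d. rewrite m_ax, <- (mR_mul q d), m_ax, mR_mul; reflexivity. Qed.

Lemma star_mL (p : multiplier A) (a : A) :
  mprojection p -> star A (mL p a) = mR p (star A a).
Proof. intros (_ & _ & _ & Hp). rewrite Hp, starK; reflexivity. Qed.

Lemma star_mR (p : multiplier A) (a : A) :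
  mprojection p -> star A (mR p a) = mL p (star A a).
Proof. intros (_ & _ & Hp & _). rewrite Hp, starK; reflexivity. Qed.

Lemma norm_mL (p : multiplier A) (a : A) : mprojection p -> norm A (mL p a) <= norm A a.
Proof.
  intro Hp. pose proof (norm_cstar A (mL p a)) as Hc.
  rewrite (star_mL p a Hp), <- m_ax, (proj1 Hp) in Hc.
  pose proof (normM A (star A a) (mL p a)) as HM. rewrite norm_star in HM.
  pose proof (norm_ge0 A a). pose proof (norm_ge0 A (mL p a)).
  destruct (Req_dec (norm A (mL p a)) 0); nra.
Qed.

Lemma norm_mR (p : multiplier A) (a : A) : mprojection p -> norm A (mR p a) <= norm A a.
Proof.
  intro Hp. rewrite <- norm_star, star_mR, <- (norm_star a) by exact Hp.
  apply norm_mL, Hp.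
Qed.

Lemma corner_mul (p1 p2 p3 p4 : multiplier A) (x y : A) :
  in_corner p1 p2 x -> in_corner p3 p4 y -> in_corner p1 p4 (mul A x y).
Proof.
  intros [a ->] [b ->]. exists (mul A (mR p2 a) (mL p3 b)).
  rewrite <- mL_mul, mLR_comm, <- mR_mul; reflexivity.
Qed.

Lemma corner_star (p q : multiplier A) (x : A) :
  mprojection p -> mprojection q -> in_corner p q x -> in_corner q p (star A x).
Proof.
  intros Hp Hq [a ->]. exists (star A a).
  rewrite star_mL, star_mR, mLR_comm by assumption; reflexivity.
Qed.

Definition compress (p q : multiplier A) (w : A) : A := mL p (mR q w).

Lemma compress_corner (p q : multiplier A) (w : A) : in_corner p q (compress p q w).
Proof. exists w; reflexivity. Qed.

Lemma norm_compress (p q : multiplier A) (w : A) :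
  mprojection p -> mprojection q -> norm A (compress p q w) <= norm A w.
Proof.
  intros Hp Hq. eapply Rle_trans; [apply norm_mL, Hp | apply norm_mR, Hq].
Qed.

Lemma compress_id (p q : multiplier A) (t : A) :
  mprojection p -> mprojection q -> in_corner p q t -> compress p q t = t.
Proof.
  intros [Hp _] [_ [Hq _]] [a ->]. unfold compress.
  rewrite <- mLR_comm, Hp, Hq; reflexivity.
Qed.

Lemma compress_orth (p q k l : multiplier A) (t : A) :
  in_corner k l t -> mprod_zero p k \/ mprod_zero l q -> compress p q t = zero.
Proof.
  intros [a ->] [[Hpk _] | [_ Hlq]]; unfold compress; rewrite <- mLR_comm.
  - apply Hpk.
  - rewrite Hlq, !mL_zero; reflexivity.
Qed.

Lemma compress_add (p q : multiplier A) (x y : A) :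
  compress p q (add A x y) = add A (compress p q x) (compress p q y).
Proof. unfold compress; rewrite mR_add, mL_add; reflexivity. Qed.

Lemma compress_zero (p q : multiplier A) : compress p q zero = zero.
Proof. unfold compress; rewrite mR_zero, mL_zero; reflexivity. Qed.

End Multipliers.

Section FiniteSums.
Context {A : CStarAlgebra}.

Lemma sumA_app (L1 L2 : list A) : sumA (L1 ++ L2) = add A (sumA L1) (sumA L2).
Proof.
  induction L1 as [|a L1 IH]; simpl; [symmetry; apply add0 | rewrite IH, addA; reflexivity].
Qed.

Lemma sumA_map_add {X : Type} (f g : X -> A) (L : list X) :
  sumA (map (fun x => add A (f x) (g x)) L) = add A (sumA (map f L)) (sumA (map g L)).
Proof.
  induction L as [|t L IH]; simpl; [symmetry; apply add0|].
  rewrite IH, !addA. f_equal. rewrite <- !addA. f_equal. apply addC.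
Qed.

Lemma sumA_zero {X : Type} (f : X -> A) (L : list X) :
  (forall x, In x L -> f x = zero) -> sumA (map f L) = zero.
Proof.
  induction L as [|t L IH]; simpl; intro Hf; [reflexivity|].
  rewrite Hf, IH by auto. apply add0.
Qed.

Lemma sumA_swap {X Y : Type} (F : X -> Y -> A) (L1 : list X) (L2 : list Y) :
  sumA (map (fun a => sumA (map (fun b => F a b) L2)) L1) =
  sumA (map (fun b => sumA (map (fun a => F a b) L1)) L2).
Proof.
  induction L1 as [|a L1 IH]; simpl.
  - symmetry; apply sumA_zero; reflexivity.
  - rewrite IH, <- sumA_map_add; reflexivity.
Qed.

Lemma sumA_single {X : Type} (f : X -> A) (S : list X) (k : X) :
  NoDup S -> In k S -> (forall j, In j S -> j <> k -> f j = zero) -> sumA (map f S) = f k.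
Proof.
  induction S as [|a S IH]; simpl; intros Hnd Hin Hz; [contradiction|].
  inversion Hnd as [|? ? Ha HS]; subst.
  destruct (classic (a = k)) as [<-|Hak].
  - rewrite sumA_zero; [apply addr0|].
    intros x Hx. apply Hz; [now right | intros <-; contradiction].
  - rewrite Hz, add0 by auto. apply IH; auto. destruct Hin; [contradiction | assumption].
Qed.

Lemma sumA_mulr (x : A) (L : list A) : mul A x (sumA L) = sumA (map (mul A x) L).
Proof. induction L as [|a L IH]; simpl; [apply mulr0 | rewrite mulDr, IH; reflexivity]. Qed.

Lemma sumA_star (L : list A) : star A (sumA L) = sumA (map (star A) L).
Proof. induction L as [|a L IH]; simpl; [apply star0 | rewrite starD, IH; reflexivity]. Qed.

Lemma compress_sum (p q : multiplier A) (L : list A) :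
  compress p q (sumA L) = sumA (map (compress p q) L).
Proof.
  induction L as [|t L IH]; simpl; [apply compress_zero | rewrite compress_add, IH; reflexivity].
Qed.

Lemma sumA_closed (B : A -> Prop) (L : list A) :
  star_subalgebra A B -> (forall t, In t L -> B t) -> B (sumA L).
Proof.
  intros (H0 & Hadd & _). induction L as [|a L IH]; simpl; intro HL; [exact H0|].
  apply Hadd; auto.
Qed.

End FiniteSums.

Lemma nodup_cover {X : Type} (L : list X) : exists S, NoDup S /\ forall x, In x L -> In x S.
Proof.
  induction L as [|a L [S [Hnd Hcov]]].
  - exists nil. split; [constructor | intros x []].
  - destruct (classic (In a S)) as [Ha | Ha].
    + exists S. split; [exact Hnd|]. intros x [<- | Hx]; auto.
    + exists (a :: S). split; [constructor; auto|]. intros x [<- | Hx]; simpl; auto.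
Qed.

Section Decompositions.
Context {A : CStarAlgebra} {I : Type} (p : I -> multiplier A) (B : A -> Prop).
Hypothesis hp : forall i, mprojection (p i).
Hypothesis horth : forall i j, i <> j -> mprod_zero (p i) (p j).
Hypothesis hB : star_subalgebra A B.

Definition decomp (S : list I) (w : A) : Prop :=
  exists l : list (I * I * A),
    (forall t, In t l -> B (snd t) /\ in_corner (p (fst (fst t))) (p (snd (fst t))) (snd t)
        /\ In (fst (fst t)) S /\ In (snd (fst t)) S) /\
    w = sumA (map snd l).

Lemma decomp_exists (b : A) (l : list (I * I * A)) :
  (forall t, In t l -> B (snd t) /\ in_corner (p (fst (fst t))) (p (snd (fst t))) (snd t)) ->
  b = sumA (map snd l) -> exists S, NoDup S /\ decomp S b.
Proof.
  intros Hl Hb.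
  set (idx := map (fun t => fst (fst t)) l ++ map (fun t => snd (fst t)) l).
  destruct (nodup_cover idx) as [S [HS Hcov]].
  exists S. split; [exact HS|]. exists l. split; [|exact Hb].
  intros t Ht. destruct (Hl t Ht) as [Bt Ct]. repeat split; auto; apply Hcov, in_or_app.
  - left; exact (in_map (fun t => fst (fst t)) l t Ht).
  - right; exact (in_map (fun t => snd (fst t)) l t Ht).
Qed.

Definition prod_terms (l1 l2 : list (I * I * A)) : list (I * I * A) :=
  flat_map (fun t1 =>
    map (fun t2 => ((fst (fst t1), snd (fst t2)), mul A (snd t1) (snd t2))) l2) l1.

Lemma prod_terms_sum (l1 l2 : list (I * I * A)) :
  mul A (sumA (map snd l1)) (sumA (map snd l2)) = sumA (map snd (prod_terms l1 l2)).
Proof.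
  unfold prod_terms. induction l1 as [|t l1 IH]; simpl; [apply mul0r|].
  rewrite map_app, sumA_app, <- IH, mulDl, sumA_mulr, !map_map; reflexivity.
Qed.

Lemma decomp_mul (S : list I) (x y : A) : decomp S x -> decomp S y -> decomp S (mul A x y).
Proof.
  intros [l1 [H1 ->]] [l2 [H2 ->]]. exists (prod_terms l1 l2).
  split; [|apply prod_terms_sum].
  intros t Ht. apply in_flat_map in Ht as [t1 [Ht1 Ht]].
  apply in_map_iff in Ht as [t2 [<- Ht2]]. simpl.
  destruct (H1 t1 Ht1) as (B1 & C1 & S1 & _), (H2 t2 Ht2) as (B2 & C2 & _ & S2).
  destruct hB as (_ & _ & _ & Hmul & _).
  repeat split; auto. eapply corner_mul; eauto.
Qed.

Lemma decomp_star (S : list I) (x : A) : decomp S x -> decomp S (star A x).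
Proof.
  intros [l [Hl ->]].
  exists (map (fun t => ((snd (fst t), fst (fst t)), star A (snd t))) l). split.
  - intros t Ht. apply in_map_iff in Ht as [t1 [<- Ht1]]. simpl.
    destruct (Hl t1 Ht1) as (B1 & C1 & S1 & S2). destruct hB as (_ & _ & _ & _ & Hstar).
    repeat split; auto. apply corner_star; auto.
  - rewrite sumA_star, !map_map; reflexivity.
Qed.

Lemma decomp_in (S : list I) (x : A) : decomp S x -> B x.
Proof.
  intros [l [Hl ->]]. apply sumA_closed; [exact hB|].
  intros t Ht. apply in_map_iff in Ht as [t1 [<- Ht1]]. apply Hl, Ht1.
Qed.

Lemma compress_other_corner (i j k l : I) (t : A) :
  in_corner (p k) (p l) t -> i <> k \/ j <> l -> compress (p i) (p j) t = zero.
Proof.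
  intros Ct Hne. apply (compress_orth _ _ _ _ _ Ct).
  destruct Hne as [Hik | Hjl]; [left; apply horth, Hik | right; apply horth; congruence].
Qed.

Lemma decomp_block_in (S : list I) (w : A) :
  decomp S w -> forall i j, B (compress (p i) (p j) w).
Proof.
  intros [l [Hl ->]] i j. rewrite compress_sum, map_map. apply sumA_closed; [exact hB|].
  intros t Ht. apply in_map_iff in Ht as [t1 [<- Ht1]].
  destruct (Hl t1 Ht1) as (Bt & Ct & _).
  destruct (classic (i = fst (fst t1) /\ j = snd (fst t1))) as [[-> ->] | Hne].
  - rewrite compress_id; auto.
  - rewrite (compress_other_corner i j _ _ _ Ct); [apply hB|].
    destruct (classic (i = fst (fst t1))); [right | left]; tauto.
Qed.

Lemma decomp_blocks (S : list I) (w : A) :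
  NoDup S -> decomp S w ->
  w = sumA (map (fun i => sumA (map (fun j => compress (p i) (p j) w) S)) S).
Proof.
  intros Hnd [l [Hl ->]].
  transitivity (sumA (map (fun t =>
     sumA (map (fun i => sumA (map (fun j => compress (p i) (p j) (snd t)) S)) S)) l)).
  - f_equal. apply map_ext_in. intros t Ht. symmetry.
    destruct (Hl t Ht) as (_ & Ct & Si & Sj).
    rewrite (sumA_single _ S (fst (fst t)) Hnd Si).
    + rewrite (sumA_single _ S (snd (fst t)) Hnd Sj); [apply compress_id; auto|].
      intros j _ Hj. apply (compress_other_corner _ _ _ _ _ Ct); right; exact Hj.
    + intros i _ Hi. apply sumA_zero. intros j _.
      apply (compress_other_corner _ _ _ _ _ Ct); left; exact Hi.
  - rewrite (sumA_swap (fun t i => sumA (map (fun j => compress (p i) (p j) (snd t)) S))).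
    f_equal. apply map_ext. intro i.
    rewrite (sumA_swap (fun t j => compress (p i) (p j) (snd t))).
    f_equal. apply map_ext. intro j. rewrite compress_sum, map_map; reflexivity.
Qed.

End Decompositions.

Lemma nonneg_quadratic_discr (a b c : R) :
  0 <= c -> (forall s, 0 <= a + 2 * s * b + s * s * c) -> b * b <= a * c.
Proof.
  intros Hc Hq. destruct (Req_dec c 0) as [Hc0 | Hc0].
  - subst c. destruct (Req_dec b 0) as [-> | Hb]; [lra|].
    exfalso. specialize (Hq (- (Rabs a + 1) / (2 * b))).
    replace (2 * (- (Rabs a + 1) / (2 * b)) * b) with (- (Rabs a + 1)) in Hq
      by (field; exact Hb).
    pose proof (Rle_abs a). lra.
  - specialize (Hq (- b / c)).
    replace (a + 2 * (- b / c) * b + - b / c * (- b / c) * c) with ((a * c - b * b) / c) in Hq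
      by (field; exact Hc0).
    apply Rmult_le_compat_r with (r := c) in Hq; [|exact Hc].
    replace ((a * c - b * b) / c * c) with (a * c - b * b) in Hq by (field; exact Hc0).
    lra.
Qed.

Section HilbertFacts.
Context {H : Hilbert}.

Lemma haddr0 (x : H) : hadd H x hzero = x.
Proof. rewrite haddC; apply hadd0. Qed.

Lemma hadd_idem_eq0 (x : H) : hadd H x x = x -> x = hzero.
Proof.
  intro Hx. transitivity (hadd H (hadd H x x) (hopp H x)).
  - rewrite <- haddA, haddN, haddr0; reflexivity.
  - rewrite Hx, haddN; reflexivity.
Qed.

Lemma hopp_unique (x y : H) : hadd H x y = hzero -> y = hopp H x.
Proof.
  intro Hxy.
  rewrite <- (hadd0 H y), <- (haddN H x), (haddC H x (hopp H x)), <- haddA, Hxy, haddr0.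
  reflexivity.
Qed.

Lemma hopp0 : hopp H hzero = hzero.
Proof. symmetry; apply hopp_unique, hadd0. Qed.

Lemma Re_inner_sym (x y : H) : Re (inner H y x) = Re (inner H x y).
Proof. rewrite inner_conj; reflexivity. Qed.

Lemma Re_inner0l (v : H) : Re (inner H hzero v) = 0.
Proof.
  pose proof (f_equal Re (innerDl H hzero hzero v)) as E.
  rewrite hadd0 in E. simpl in E. lra.
Qed.

Lemma hnorm_ge0 (x : H) : 0 <= hnorm x.
Proof. apply sqrt_pos. Qed.

Lemma hnorm_sq (x : H) : hnorm x * hnorm x = Re (inner H x x).
Proof. apply sqrt_sqrt, inner_pos. Qed.

Lemma hnorm0 : hnorm (@hzero H) = 0.
Proof. unfold hnorm. rewrite Re_inner0l. apply sqrt_0. Qed.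

Lemma hnorm_sq_add_smul (u v : H) (s : R) :
  Re (inner H (hadd H u (hsmul H (mkC s 0) v)) (hadd H u (hsmul H (mkC s 0) v))) =
  Re (inner H u u) + 2 * s * Re (inner H u v) + s * s * Re (inner H v v).
Proof.
  set (w := hadd H u (hsmul H (mkC s 0) v)).
  assert (Ew : Re (inner H w w) = Re (inner H u w) + s * Re (inner H v w))
    by (unfold w at 1; rewrite innerDl, innerZl; simpl; ring).
  assert (Eu : Re (inner H u w) = Re (inner H u u) + s * Re (inner H v u))
    by (rewrite Re_inner_sym; unfold w; rewrite innerDl, innerZl; simpl; ring).
  assert (Ev : Re (inner H v w) = Re (inner H u v) + s * Re (inner H v v))
    by (rewrite Re_inner_sym; unfold w; rewrite innerDl, innerZl; simpl; ring).
  rewrite Ew, Eu, Ev, (Re_inner_sym u v). ring.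
Qed.

Lemma cauchy_schwarz (u v : H) : Re (inner H u v) <= hnorm u * hnorm v.
Proof.
  pose proof (hnorm_ge0 u). pose proof (hnorm_ge0 v).
  assert (Hd : Re (inner H u v) * Re (inner H u v) <= (hnorm u * hnorm u) * (hnorm v * hnorm v)).
  { apply nonneg_quadratic_discr; [nra|]. intro s.
    rewrite !hnorm_sq, <- hnorm_sq_add_smul. apply inner_pos. }
  destruct (Rle_dec (Re (inner H u v)) 0); [nra|].
  apply Rsqr_incr_0_var; unfold Rsqr; nra.
Qed.

Lemma hnorm_triangle (u v : H) : hnorm (hadd H u v) <= hnorm u + hnorm v.
Proof.
  pose proof (hnorm_sq_add_smul u v 1) as Q. rewrite (hsmul1 H v : hsmul H (mkC 1 0) v = v) in Q.
  rewrite <- !hnorm_sq in Q. pose proof (cauchy_schwarz u v).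
  pose proof (hnorm_ge0 u). pose proof (hnorm_ge0 v).
  apply Rsqr_incr_0_var; unfold Rsqr; nra.
Qed.

Lemma hnorm_smul_real (r : R) (v : H) : hnorm (hsmul H (mkC r 0) v) = Rabs r * hnorm v.
Proof.
  pose proof (hnorm_sq_add_smul hzero v r) as Q. rewrite hadd0, !Re_inner0l in Q.
  unfold hnorm at 1. rewrite Q.
  replace (0 + 2 * r * 0 + r * r * Re (inner H v v)) with (Rsqr r * Re (inner H v v))
    by (unfold Rsqr; ring).
  rewrite sqrt_mult, sqrt_Rsqr_abs; [reflexivity | apply Rle_0_sqr | apply inner_pos].
Qed.

End HilbertFacts.

Section Representations.
Context {A : CStarAlgebra} (B : A -> Prop) {H : Hilbert} (pi : A -> H -> H).
Hypothesis hB : star_subalgebra A B.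
Hypothesis hr : representation A B H pi.

Lemma pi_zero (x : H) : pi zero x = hzero.
Proof.
  destruct hB as (H0 & _), hr as (_ & Hadd & _).
  apply hadd_idem_eq0. rewrite <- Hadd, add0 by exact H0. reflexivity.
Qed.

Lemma opp_in (b : A) : B b -> B (opp A b).
Proof. destruct hB as (_ & _ & Hsmul & _). intro Hb. rewrite opp_smul. auto. Qed.

Lemma pi_opp (b : A) (x : H) : B b -> pi (opp A b) x = hopp H (pi b x).
Proof.
  intro Hb. apply hopp_unique. destruct hr as (_ & Hadd & _).
  rewrite <- Hadd by (auto using opp_in). rewrite addN. apply pi_zero.
Qed.

Lemma pi_sum_bound (L : list A) (x : H) (beta : R) :
  (forall t, In t L -> B t) -> (forall t, In t L -> hnorm (pi t x) <= beta) ->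
  hnorm (pi (sumA L) x) <= INR (length L) * beta.
Proof.
  induction L as [|a L IH]; intros HB Hb; simpl sumA.
  - rewrite pi_zero, hnorm0. simpl. lra.
  - assert (BS : B (sumA L)) by (apply sumA_closed; auto; intros t Ht; apply HB; now right).
    destruct hr as (_ & Hadd & _). rewrite Hadd by (auto; apply HB; now left).
    eapply Rle_trans; [apply hnorm_triangle|]. simpl length. rewrite S_INR.
    specialize (IH (fun t h => HB t (or_intror h)) (fun t h => Hb t (or_intror h))).
    specialize (Hb a (or_introl eq_refl)). lra.
Qed.

(* The representation analogue of the C*-identity:
   [|pi(z) x|^2 = <pi(z* z) x, x> <= |pi(z* z)| |x|^2]. *)
Lemma pi_sq_bound (z : A) (c : R) :
  B z -> (forall x, hnorm (pi (mul A (star A z) z) x) <= c * hnorm x) ->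
  forall x, hnorm (pi z x) * hnorm (pi z x) <= c * (hnorm x * hnorm x).
Proof.
  intros Hz Hc x. destruct hr as (_ & _ & _ & Hmul & Hinner).
  assert (Bs : B (star A z)) by (destruct hB as (_ & _ & _ & _ & Hs); auto).
  rewrite hnorm_sq, Hinner, <- Hmul by auto.
  eapply Rle_trans; [apply cauchy_schwarz|].
  specialize (Hc x). pose proof (hnorm_ge0 x). nra.
Qed.

Lemma contractive_continuous :
  (forall b, B b -> forall x, hnorm (pi b x) <= norm A b * hnorm x) ->
  rep_continuous A B H pi.
Proof.
  intros Hcontr b0 Hb0 eps Heps. exists eps. split; [exact Heps|].
  intros b Hb Hlt. exists (norm A (add A b (opp A b0))). split; [exact Hlt|]. intro x.
  assert (Bd : B (add A b (opp A b0))) by (apply hB; auto using opp_in).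
  pose proof (Hcontr _ Bd x) as Hc.
  destruct hr as (_ & Hadd & _). rewrite Hadd, pi_opp in Hc by auto using opp_in.
  exact Hc.
Qed.

End Representations.

Lemma representation_restrict {A : CStarAlgebra} (B P : A -> Prop) {H : Hilbert}
  (pi : A -> H -> H) :
  (forall z, P z -> B z) -> representation A B H pi -> representation A P H pi.
Proof.
  intros PB (r1 & r2 & r3 & r4 & r5).
  split; [intros b Pb; apply r1, PB, Pb|]. repeat split; intros; auto.
Qed.

Lemma Cabs_real (r : R) : Cabs (mkC r 0) = Rabs r.
Proof.
  unfold Cabs; simpl. replace (r * r + 0 * 0) with (Rsqr r) by (unfold Rsqr; ring).
  apply sqrt_Rsqr_abs.
Qed.

(* Continuity at [0] of a representation of a core subalgebra yields a
   uniform bound [|pi(z)| <= K |z|]. *)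
Lemma core_bounded {A : CStarAlgebra} (P : A -> Prop) {H : Hilbert} (pi : A -> H -> H) :
  core_subalgebra A P -> representation A P H pi ->
  exists K, 0 <= K /\ forall z, P z -> forall x, hnorm (pi z x) <= K * norm A z * hnorm x.
Proof.
  intros [hP hcont] hr. pose proof hP as (P0 & _ & Psmul & _).
  destruct (hcont H pi hr zero P0 1 Rlt_0_1) as [delta [Hd Hcont]].
  exists (2 / delta). split; [apply Rlt_le, Rdiv_lt_0_compat; lra|].
  intros z Pz x.
  pose proof (norm_ge0 A z). pose proof (hnorm_ge0 x). pose proof (hnorm_ge0 (pi z x)).
  destruct (Req_dec (norm A z) 0) as [Z | Z].
  { apply norm_eq0 in Z. subst z. rewrite (pi_zero P pi hP hr), hnorm0, norm0. lra. }
  set (r := delta / (2 * norm A z)).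
  assert (rpos : 0 < r) by (unfold r; apply Rdiv_lt_0_compat; lra).
  set (w := smul A (mkC r 0) z).
  assert (Nw : norm A (add A w (opp A zero)) < delta).
  { rewrite opp0, addr0. unfold w. rewrite normZ, Cabs_real, Rabs_pos_eq by lra.
    unfold r. field_simplify; lra. }
  destruct (Hcont w (Psmul _ _ Pz) Nw) as [c [Hc1 Hc2]]. specialize (Hc2 x); cbv beta in Hc2.
  rewrite (pi_zero P pi hP hr), hopp0, haddr0 in Hc2.
  destruct hr as (_ & _ & Hsm & _). unfold w in Hc2. rewrite Hsm in Hc2 by exact Pz.
  rewrite hnorm_smul_real, Rabs_pos_eq in Hc2 by lra.
  assert (E : 2 / delta * norm A z * hnorm x = hnorm x / r) by (unfold r; field; lra).
  rewrite E. apply (Rmult_le_reg_l r); [exact rpos|]. field_simplify; nra.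
Qed.

Section DecomposableBounds.
Context {A : CStarAlgebra} {I : Type} (p : I -> multiplier A) (B : A -> Prop).
Context {H : Hilbert} (pi : A -> H -> H).
Hypothesis hp : forall i, mprojection (p i).
Hypothesis horth : forall i j, i <> j -> mprod_zero (p i) (p j).
Hypothesis hB : star_subalgebra A B.
Hypothesis hr : representation A B H pi.

Definition diag_corner_bound (S : list I) (C : R) : Prop :=
  forall j, In j S -> forall z, B z -> in_corner (p j) (p j) z ->
    forall x, hnorm (pi z x) <= C * norm A z * hnorm x.

Lemma diag_corner_bound_exists (S : list I) :
  (forall i, core_subalgebra A (fun x => B x /\ in_corner (p i) (p i) x)) ->
  exists C, 1 <= C /\ diag_corner_bound S C.
Proof.
  intro hcore. induction S as [|j S [C [HC1 HC]]].
  { exists 1. split; [lra | intros j []]. }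
  destruct (core_bounded _ pi (hcore j)
              (representation_restrict B _ pi (fun z h => proj1 h) hr)) as [K [HK0 HK]].
  exists (Rmax C K). split; [eapply Rle_trans; [exact HC1 | apply Rmax_l]|].
  intros j' Hj z Bz Cz x.
  assert (Hzx : 0 <= norm A z * hnorm x) by (apply Rmult_le_pos; [apply norm_ge0 | apply hnorm_ge0]).
  rewrite (Rmult_assoc (Rmax C K)). destruct Hj as [<- | Hj].
  - eapply Rle_trans; [apply HK; auto|]. rewrite Rmult_assoc.
    apply Rmult_le_compat_r; [exact Hzx | apply Rmax_r].
  - eapply Rle_trans; [apply (HC j'); auto|]. rewrite Rmult_assoc.
    apply Rmult_le_compat_r; [exact Hzx | apply Rmax_l].
Qed.

(* An off-diagonal block [z ∈ B ∩ p_i A p_j] is controlled through the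
   diagonal element [z* z ∈ p_j A p_j] and the C*-identity. *)
Lemma block_bound (S : list I) (C : R) (i j : I) (z : A) :
  1 <= C -> diag_corner_bound S C -> In j S -> B z -> in_corner (p i) (p j) z ->
  forall x, hnorm (pi z x) <= C * norm A z * hnorm x.
Proof.
  intros HC1 HC Hj Bz Cz x.
  assert (Hzz : forall x, hnorm (pi (mul A (star A z) z) x) <= (C * (norm A z * norm A z)) * hnorm x).
  { intro y. rewrite <- norm_cstar. apply (HC j Hj).
    - destruct hB as (_ & _ & _ & Hmul & Hstar). auto.
    - eapply corner_mul; [apply corner_star|]; eauto. }
  pose proof (pi_sq_bound B pi hB hr z _ Bz Hzz x) as Hsq.
  pose proof (norm_ge0 A z) as Hz. pose proof (hnorm_ge0 x) as Hx.
  apply Rsqr_incr_0_var; unfold Rsqr.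
  - eapply Rle_trans; [exact Hsq|].
    assert (0 <= norm A z * norm A z * (hnorm x * hnorm x)) by (apply Rmult_le_pos; nra).
    nra.
  - apply Rmult_le_pos; [apply Rmult_le_pos; lra | exact Hx].
Qed.

(* Summing the [|S|^2] blocks: every [w] decomposable over [S] satisfies
   [|pi(w)| <= |S|^2 C |w|]. *)
Lemma decomp_bound (S : list I) (C : R) (w : A) :
  1 <= C -> diag_corner_bound S C -> NoDup S -> decomp p B S w ->
  forall x, hnorm (pi w x) <= (INR (length S) * (INR (length S) * C)) * norm A w * hnorm x.
Proof.
  intros HC1 HC Hnd Hw x.
  set (row i := sumA (map (fun j => compress (p i) (p j) w) S)).
  assert (Hblock : forall i j, B (compress (p i) (p j) w)) by exact (decomp_block_in p B hp horth hB S w Hw).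
  assert (Hrow : forall i, B (row i)).
  { intro i. apply sumA_closed; [exact hB|]. intros t Ht.
    apply in_map_iff in Ht as [j [<- _]]. apply Hblock. }
  assert (Hrow_bound : forall i, hnorm (pi (row i) x) <= INR (length S) * (C * norm A w * hnorm x)).
  { intro i. unfold row. rewrite <- (length_map (fun j => compress (p i) (p j) w) S).
    apply (pi_sum_bound B pi hB hr).
    - intros t Ht. apply in_map_iff in Ht as [j [<- _]]. apply Hblock.
    - intros t Ht. apply in_map_iff in Ht as [j [<- Hj]].
      eapply Rle_trans; [apply (block_bound S C i j); auto using compress_corner|].
      apply Rmult_le_compat_r; [apply hnorm_ge0|]. apply Rmult_le_compat_l; [lra|].
      apply norm_compress; auto. }
  rewrite (decomp_blocks p B hp horth S w Hnd Hw) at 1. fold row.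
  rewrite <- (length_map row S) at 1.
  eapply Rle_trans.
  - apply (pi_sum_bound B pi hB hr).
    + intros t Ht. apply in_map_iff in Ht as [i [<- _]]. apply Hrow.
    + intros t Ht. apply in_map_iff in Ht as [i [<- _]]. apply Hrow_bound.
  - rewrite length_map. right. ring.
Qed.

End DecomposableBounds.

Fixpoint itsqrt (n : nat) (M : R) : R :=
  match n with O => M | S k => sqrt (itsqrt k M) end.

Lemma itsqrt_nonneg (n : nat) (M : R) : 0 <= M -> 0 <= itsqrt n M.
Proof. intro HM. destruct n; simpl; [exact HM | apply sqrt_pos]. Qed.

(* [M^(1/2^n) <= 1 + M/2^n], since [sqrt(1 + t) <= 1 + t/2]. *)
Lemma itsqrt_le (n : nat) (M : R) : 0 <= M -> itsqrt n M <= 1 + M / 2 ^ n.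
Proof.
  intro HM. induction n as [|n IH]; simpl.
  - lra.
  - pose proof (pow_lt 2 n ltac:(lra)). pose proof (itsqrt_nonneg n M HM).
    assert (0 <= M / 2 ^ n) by (unfold Rdiv; apply Rmult_le_pos; [lra | apply Rlt_le, Rinv_0_lt_compat; lra]).
    replace (M / (2 * 2 ^ n)) with (M / 2 ^ n / 2) by (field; lra).
    apply Rsqr_incr_0_var; unfold Rsqr; [rewrite sqrt_sqrt by assumption; nra | lra].
Qed.

Lemma INR_lt_pow2 (n : nat) : INR n < 2 ^ n.
Proof.
  replace 2 with (INR 2) by (simpl; ring). rewrite <- pow_INR.
  apply lt_INR, Nat.pow_gt_lin_r. lia.
Qed.

Lemma le_of_le_add_div_pow2 (a c K : R) :
  0 <= K -> (forall n, a <= c + K / 2 ^ n) -> a <= c.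
Proof.
  intros HK Hn. destruct (Rle_dec a c) as [Hac | Hac]; [exact Hac|]. exfalso.
  assert (Heps : 0 < (a - c) / (K + 1)) by (apply Rdiv_lt_0_compat; lra).
  destruct (archimed_cor1 _ Heps) as [N [HN HN0]].
  specialize (Hn N). pose proof (INR_lt_pow2 N) as Hpow.
  assert (HNpos : 0 < INR N) by (apply lt_0_INR; exact HN0).
  assert (Hsmall : K / 2 ^ N < a - c).
  { apply Rle_lt_trans with ((K + 1) / INR N).
    - unfold Rdiv. apply Rmult_le_compat; [lra | apply Rlt_le, Rinv_0_lt_compat; lra | lra |].
      apply Rlt_le, Rinv_lt_contravar; nra.
    - apply Rmult_lt_compat_l with (r := K + 1) in HN; [|lra].
      replace ((K + 1) * ((a - c) / (K + 1))) with (a - c) in HN by (field; lra).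
      exact HN. }
  lra.
Qed.

Section SpectralRadiusTrick.
Context {A : CStarAlgebra} (B : A -> Prop) {H : Hilbert} (pi : A -> H -> H).
Hypothesis hB : star_subalgebra A B.
Hypothesis hr : representation A B H pi.
Variable D : A -> Prop.
Hypothesis D_in : forall w, D w -> B w.
Hypothesis D_sq : forall w, D w -> D (mul A w w).

(* From [|pi(w)| <= M |w|] on [D], squaring self-adjoint elements and the
   C*-identity [|z^2| = |z|^2] improve the constant to [M^(1/2^n)]. *)
Lemma self_adjoint_bound_iter (M : R) :
  0 <= M -> (forall w, D w -> forall x, hnorm (pi w x) <= M * norm A w * hnorm x) ->
  forall n z, D z -> star A z = z ->
    forall x, hnorm (pi z x) <= itsqrt n M * norm A z * hnorm x.
Proof.
  intros HM Hbound n. induction n as [|n IH]; intros z Dz Sz x; [apply Hbound, Dz|].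
  simpl. set (s := itsqrt n M). pose proof (itsqrt_nonneg n M HM) as Hs. fold s in Hs.
  assert (Hzz : forall y, hnorm (pi (mul A (star A z) z) y) <= (s * (norm A z * norm A z)) * hnorm y).
  { intro y. rewrite <- (norm_cstar A z), Sz. apply IH; auto.
    rewrite starM, Sz; reflexivity. }
  pose proof (pi_sq_bound B pi hB hr z _ (D_in z Dz) Hzz x) as Hsq.
  pose proof (norm_ge0 A z). pose proof (hnorm_ge0 x). pose proof (sqrt_pos s).
  apply Rsqr_incr_0_var; unfold Rsqr; [| apply Rmult_le_pos; [apply Rmult_le_pos|]; auto].
  eapply Rle_trans; [exact Hsq|]. right.
  replace (sqrt s * norm A z * hnorm x * (sqrt s * norm A z * hnorm x)) with
    ((sqrt s * sqrt s) * (norm A z * norm A z) * (hnorm x * hnorm x)) by ring.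
  rewrite sqrt_sqrt by exact Hs. ring.
Qed.

(* Letting [n -> oo]: any bound on [D] self-improves to contractivity on the
   self-adjoint elements of [D]. *)
Lemma self_adjoint_contractive (M : R) :
  0 <= M -> (forall w, D w -> forall x, hnorm (pi w x) <= M * norm A w * hnorm x) ->
  forall z, D z -> star A z = z -> forall x, hnorm (pi z x) <= norm A z * hnorm x.
Proof.
  intros HM Hbound z Dz Sz x.
  assert (Hzx : 0 <= norm A z * hnorm x) by (apply Rmult_le_pos; [apply norm_ge0 | apply hnorm_ge0]).
  apply (le_of_le_add_div_pow2 _ _ (M * (norm A z * hnorm x))); [apply Rmult_le_pos; assumption|].
  intro n. eapply Rle_trans; [apply (self_adjoint_bound_iter M HM Hbound n z Dz Sz)|].
  rewrite Rmult_assoc.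
  replace (norm A z * hnorm x + M * (norm A z * hnorm x) / 2 ^ n)
    with ((1 + M / 2 ^ n) * (norm A z * hnorm x))
    by (field; apply pow_nonzero; lra).
  apply Rmult_le_compat_r; [exact Hzx | apply itsqrt_le, HM].
Qed.

End SpectralRadiusTrick.

(* Fix [b ∈ B] and a finite index list [S] over which [b] decomposes; the
   elements decomposable over [S] form a *-closed, multiplicatively closed
   set on which [pi] is bounded, so the self-adjoint [b* b] is mapped
   contractively, and hence so is [b]. *)
Lemma core_blocks_contractive (A : CStarAlgebra) (I : Type) (p : I -> multiplier A)
  (B : A -> Prop) (H : Hilbert) (pi : A -> H -> H)
  (hp : forall i, mprojection (p i))
  (horth : forall i j, i <> j -> mprod_zero (p i) (p j))
  (hB : star_subalgebra A B)
  (hdec : forall b, B b ->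
     exists l : list (I * I * A),
       (forall t, In t l -> B (snd t) /\ in_corner (p (fst (fst t))) (p (snd (fst t))) (snd t)) /\
       b = sumA (map snd l))
  (hcore : forall i, core_subalgebra A (fun x => B x /\ in_corner (p i) (p i) x))
  (hr : representation A B H pi) :
  forall b, B b -> forall x, hnorm (pi b x) <= norm A b * hnorm x.
Proof.
  intros b Hb x.
  destruct (hdec b Hb) as [l [Hl Eb]].
  destruct (decomp_exists p B b l Hl Eb) as [S [Hnd Db]].
  destruct (diag_corner_bound_exists p B pi hr S hcore) as [C [HC1 HC]].
  set (M := INR (length S) * (INR (length S) * C)).
  assert (HM : 0 <= M) by (pose proof (pos_INR (length S)); unfold M; nra).
  set (y := mul A (star A b) b).
  assert (Dy : decomp p B S y) by exact (decomp_mul p B hB S _ _ (decomp_star p B hp hB S b Db) Db).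
  assert (Sy : star A y = y) by (unfold y; rewrite starM, starK; reflexivity).
  assert (Hy : forall x, hnorm (pi y x) <= norm A y * hnorm x).
  { apply (self_adjoint_contractive B pi hB hr (decomp p B S) (decomp_in p B hB S)
             (fun w Dw => decomp_mul p B hB S w w Dw Dw) M HM); [|exact Dy | exact Sy].
    intros w Dw. exact (decomp_bound p B pi hp horth hB hr S C w HC1 HC Hnd Dw). }
  pose proof (pi_sq_bound B pi hB hr b _ Hb Hy x) as Hsq.
  unfold y in Hsq. rewrite norm_cstar in Hsq.
  pose proof (norm_ge0 A b). pose proof (hnorm_ge0 x).
  apply Rsqr_incr_0_var; unfold Rsqr; [nra | apply Rmult_le_pos; assumption].
Qed.

Theorem mainTheorem5 (A : CStarAlgebra) (I : Type) (p : I -> multiplier A)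
  (B : A -> Prop)
  (hp : forall i, mprojection (p i))
  (horth : forall i j, i <> j -> mprod_zero (p i) (p j))
  (hB : star_subalgebra A B)
  (hdec : forall b, B b ->
     exists l : list (I * I * A),
       (forall t, In t l -> B (snd t) /\ in_corner (p (fst (fst t))) (p (snd (fst t))) (snd t)) /\
       b = sumA (map snd l))
  (hcore : forall i, core_subalgebra A (fun x => B x /\ in_corner (p i) (p i) x)) :
  core_subalgebra A B.
Proof.
  split; [exact hB|]. intros H pi hr.
  apply (contractive_continuous B pi hB hr).
  exact (core_blocks_contractive A I p B H pi hp horth hB hdec hcore hr).
Qed.
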